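(* There is a sufficiently large absolute constant $C>0$ such that the following holds. Assume $1\le d\le 10n$, and let $k_0\in[d]$, $n_0\in[n]$ satisfy $k_0n_0^2\ge Cn^2$. Then $\mathbb P(\mathcal D(k_0,n_0))\ge 1-e^{-n}$.
   Context: Let $\pi_n^1,\dots,\pi_n^d$ be independent uniformly random permutations of $[n]$. For $L\subset[d]$ and $I,J\subset[n]$ put $e_L(I,J)=\sum_{\ell\in L}\sum_{i\in I}\mathbf 1(\pi_n^\ell(i)\in J)$. The no-holes event is $$\mathcal D(k_0,n_0)=\bigcap_{L\subset[d]:|L|\ge k_0}\ \bigcap_{I,J\subset[n]:|I|,|J|\ge n_0}\Big\{e_L(I,J)\ge\frac{|L||I||J|}{2n}\Big\}.$$ *)

From HB Require Import structures.
From mathcomp Require Import all_boot all_order all_algebra all_fingroup.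
From mathcomp Require Import all_classical all_reals all_analysis.
Set Implicit Arguments. Unset Strict Implicit. Unset Printing Implicit Defensive.
Import Order.TTheory GRing.Theory Num.Theory.

Definition perm_family (d n : nat) := {ffun 'I_d -> {perm 'I_n}}.

Definition eL (d n : nat) (pi : perm_family d n)
    (L : {set 'I_d}) (I J : {set 'I_n}) : nat :=
  \sum_(l in L) \sum_(i in I) (pi l i \in J).

(* The no-holes event D(k0,n0): e_L(I,J) >= |L||I||J|/(2n), i.e.
   2n * e_L(I,J) >= |L||I||J| (exact, over naturals). *)
Definition no_holes (d n k0 n0 : nat) (pi : perm_family d n) : bool :=
  [forall L : {set 'I_d}, (k0 <= #|L|) ==>
    [forall I : {set 'I_n}, forall J : {set 'I_n},
      ((n0 <= #|I|) && (n0 <= #|J|)) ==>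
      (#|L| * #|I| * #|J| <= 2 * n * eL pi L I J)]].

(* Probability of an event under independent uniform permutations:
   uniform measure on the finite set of d-tuples of permutations. *)
Definition unif_prob (R : realType) (d n : nat) (E : pred (perm_family d n)) : R :=
  (#|[set pi | E pi]|%:R / #|[set: perm_family d n]|%:R)%R.
Arguments unif_prob R d n E : clear implicits.
Arguments no_holes d n k0 n0 pi : clear implicits.

From HB Require Import structures.
From mathcomp Require Import all_boot all_order all_algebra all_fingroup.
From mathcomp Require Import all_classical all_reals all_analysis.
From mathcomp Require Import unstable ring lra zify.
Import Order.TTheory GRing.Theory Num.Theory.
Set Implicit Arguments.
Unset Strict Implicit.
Unset Printing Implicit Defensive.
Local Open Scope ring_scope.

(* Fix L, I, J and put w y = exp (- [y \in J]).  Since the permutations are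
   independent, E[exp (- e_L(I,J))] factorises into |L| copies of
   E[prod_(i in I) w (s i)] for a single uniform permutation s, and for a
   two-valued weight this is at most (mean w)^|I|: conditioning s x to be a
   heavy point leaves fewer heavy points for the other images (sampling
   without replacement is negatively correlated).  Hence
   E[exp (- e_L)] <= exp (- (1 - 1/e) mu) with mu = |L||I||J|/n, and the
   exponential Markov inequality bounds P(e_L < mu/2) by exp (- mu/18).  When
   k0 n0^2 >= 234 n^2 this is at most exp (- 13 n), and a union bound over
   the at most 2^(d+2n) <= e^(12n) triples (L, I, J) leaves e^(-n). *)

Section StepWeight.
Variables (R : realType) (n : nat) (K : {set 'I_n}) (c0 c1 : R).
Hypotheses (c0_ge0 : 0 <= c0) (c0_le_c1 : c0 <= c1).

Definition step_weight (y : 'I_n) : R := if y \in K then c1 else c0.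
Local Notation w := step_weight.

Lemma step_weight_ge0 y : 0 <= w y.
Proof. by rewrite /w; case: ifP => // _; apply: le_trans c0_le_c1. Qed.

Lemma sum_step_weight : \sum_y w y = #|K|%:R * c1 + #|~: K|%:R * c0.
Proof.
rewrite (bigID (mem K)) /=.
have -> : \sum_(y in K) w y = \sum_(y in K) c1.
  by apply: eq_bigr => y yK; rewrite /w yK.
have -> : \sum_(y | y \notin K) w y = \sum_(y | y \notin K) c0.
  by apply: eq_bigr => y yK; rewrite /w (negbTE yK).
rewrite !sumr_const !mulr_natl; congr (_ + c0 *+ _).
by apply: eq_card => y; rewrite !inE.
Qed.

Let fiber_sum (I : {set 'I_n}) (x y : 'I_n) : R :=
  \sum_(s : {perm 'I_n} | s x == y) \prod_(i in I) w (s i).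

(* Post-composing with the transposition of [y] and [y'] maps one index set
   onto the other and can only turn a factor [w y' = c0] into [w y = c1]. *)
Lemma fiber_sum_le (I : {set 'I_n}) x y y' :
  x \notin I -> y \in K -> y' \notin K -> fiber_sum I x y <= fiber_sum I x y'.
Proof.
move=> xI yK y'K; rewrite /fiber_sum.
have yy' : y != y' by apply: contraNneq y'K => <-.
rewrite [in X in _ <= X](reindex_inj (mulIg (tperm y y'))) /=.
rewrite [X in _ <= X](eq_bigl (fun s : {perm 'I_n} => s x == y)) => [|s]; last first.
  rewrite permM; apply/eqP/eqP => [h|<-]; last exact: tpermL.
  by apply: (@perm_inj _ (tperm y y')); rewrite h tpermL.
apply: ler_sum => s /eqP sx; apply: ler_prod => i iI.
rewrite step_weight_ge0 permM /=.
have siy : s i != y by rewrite -sx; apply: contraNneq xI => /perm_inj <-.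
have [->|siy'] := eqVneq (s i) y'; first by rewrite tpermR /w yK (negbTE y'K).
by rewrite tpermD // eq_sym.
Qed.

Lemma fiber_sum_cross_le (I : {set 'I_n}) x : x \notin I ->
  #|~: K|%:R * \sum_(y in K) fiber_sum I x y <=
  #|K|%:R * \sum_(y in ~: K) fiber_sum I x y.
Proof.
move=> xI; rewrite !mulr_sumr.
rewrite (eq_bigr (fun y => \sum_(y' in ~: K) fiber_sum I x y)) => [|y _].
  rewrite [X in _ <= X](eq_bigr (fun y' => \sum_(y in K) fiber_sum I x y')).
    rewrite exchange_big /=; apply: ler_sum => y' y'K; apply: ler_sum => y yK.
    by apply: fiber_sum_le => //; rewrite -finset.in_setC.
  by move=> y' _; rewrite sumr_const mulr_natl.
by rewrite sumr_const mulr_natl.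
Qed.

Lemma sum_perm_weight_mul_le (I : {set 'I_n}) x : x \notin I ->
  \sum_(s : {perm 'I_n}) w (s x) * \prod_(i in I) w (s i) <=
  ((\sum_y w y) / n%:R) * \sum_(s : {perm 'I_n}) \prod_(i in I) w (s i).
Proof.
move=> xI.
have n_gt0 : 0 < n%:R :> R by rewrite ltr0n; case: n x {xI} => [[]|].
have split_K (F : 'I_n -> R) : \sum_y F y = \sum_(y in K) F y + \sum_(y in ~: K) F y.
  by rewrite (bigID (mem K)) /=; congr (_ + _); apply: eq_bigl => y; rewrite !inE.
rewrite sum_step_weight !(partition_big (fun s : {perm 'I_n} => s x) predT) //= !split_K.
rewrite [X in X + _ <= _](eq_bigr (fun y => c1 * fiber_sum I x y)) => [|y yK]; last first.
  by rewrite mulr_sumr; apply: eq_bigr => s /eqP ->; rewrite /w yK.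
rewrite [X in _ + X <= _](eq_bigr (fun y => c0 * fiber_sum I x y)) => [|y]; last first.
  rewrite inE => yK; rewrite mulr_sumr; apply: eq_bigr => s /eqP ->.
  by rewrite /w (negbTE yK).
rewrite -!mulr_sumr mulrAC ler_pdivlMr //.
have card_n : n%:R = #|K|%:R + #|~: K|%:R :> R by rewrite -natrD cardsC card_ord.
rewrite [X in _ <= _ * (X + _)](eq_bigr (fiber_sum I x)) //.
rewrite [X in _ <= _ * (_ + X)](eq_bigr (fiber_sum I x)) // card_n.
have cross := fiber_sum_cross_le xI; rewrite -subr_ge0 in cross.
have c1_c0 : 0 <= c1 - c0 by rewrite subr_ge0.
have := mulr_ge0 c1_c0 cross; lra.
Qed.

Lemma sum_perm_prod_weight_le (I : {set 'I_n}) :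
  \sum_(s : {perm 'I_n}) \prod_(i in I) w (s i) <=
  n`!%:R * ((\sum_y w y) / n%:R) ^+ #|I|.
Proof.
have mean_ge0 : 0 <= (\sum_y w y) / n%:R.
  by rewrite divr_ge0 // sumr_ge0 // => y _; apply: step_weight_ge0.
move cardI: #|I| => m; elim: m I cardI => [|m IHm] I cardI.
  move/eqP: cardI; rewrite cards_eq0 => /eqP ->.
  rewrite (eq_bigr (fun=> 1)) => [|s]; last by rewrite big_set0.
  by rewrite sumr_const card_Sn mulr1.
have [x xI] : {x | x \in I} by apply/sigW/set0Pn; rewrite -card_gt0 cardI.
rewrite (eq_bigr (fun s : {perm 'I_n} => w (s x) * \prod_(i in I :\ x) w (s i)));
  last by move=> s _; rewrite (big_setD1 x).
apply: le_trans (sum_perm_weight_mul_le (x := x) (I := I :\ x) _) _.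
  by rewrite !inE eqxx.
rewrite exprS mulrCA ler_wpM2l // IHm //.
by move: cardI; rewrite (cardsD1 x) xI add1n => -[].
Qed.
End StepWeight.

Section ExpBounds.
Variable R : realType.

Lemma card_le_mul_expR_le (T : finType) (f : T -> R) a :
  #|[set t | f t <= a]|%:R * expR (- a) <= \sum_t expR (- f t).
Proof.
rewrite mulrC mulr_natr -sumr_const.
apply: le_trans (_ : \sum_(t in [set t | f t <= a]) expR (- f t) <= _).
  by apply: ler_sum => t; rewrite inE ler_expR lerN2.
rewrite [X in _ <= X](bigID (mem [set t | f t <= a])) /= lerDl.
by apply: sumr_ge0 => t _; apply: expR_ge0.
Qed.

Lemma expRN1_le : expR (-1) <= 4 / 9 :> R.
Proof.
have sqrt_e : 3 / 2 <= expR (1 / 2) :> R by have := expR_ge1Dx (1 / 2 : R); lra.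
have e_ge : 9 / 4 <= expR 1 :> R.
  have -> : expR 1 = expR (1 / 2) * expR (1 / 2) :> R.
    by rewrite -expRD; congr expR; lra.
  by nra.
rewrite expRN -(ler_pM2r (expR_gt0 1)) mulVf ?gt_eqF ?expR_gt0 //.
by have := expR_gt0 (1 : R); nra.
Qed.
End ExpBounds.

Section HoleTail.
Variables (R : realType) (d n : nat) (L : {set 'I_d}) (I J : {set 'I_n}).

Let wJ : 'I_n -> R := step_weight (~: J) (expR (-1)) 1.

Let expRN1_ge0 : 0 <= expR (-1) :> R := expR_ge0 _.
Let expRN1_le1 : expR (-1) <= 1 :> R.
Proof. by rewrite expR_le1 lerN10. Qed.

Lemma expR_eL (pi : perm_family d n) :
  expR (- (eL pi L I J)%:R) = \prod_(l in L) \prod_(i in I) wJ (pi l i).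
Proof.
rewrite /eL natr_sum -sumrN expR_sum; apply: eq_bigr => l _.
rewrite natr_sum -sumrN expR_sum; apply: eq_bigr => i _.
by rewrite /wJ /step_weight !inE; case: (pi l i \in J); rewrite ?oppr0 ?expR0.
Qed.

Lemma sum_expR_eL_le :
  \sum_(pi : perm_family d n) expR (- (eL pi L I J)%:R) <=
  n`!%:R ^+ d * ((\sum_y wJ y) / n%:R) ^+ (#|L| * #|I|).
Proof.
under eq_bigr do rewrite expR_eL big_mkcond.
rewrite -(bigA_distr_bigA (fun l (s : {perm 'I_n}) =>
  if l \in L then \prod_(i in I) wJ (s i) else 1)) /=.
set m := (\sum_y wJ y) / n%:R.
apply: le_trans (_ : _ <= \prod_(l < d) (n`!%:R * (if l \in L then m ^+ #|I| else 1))) _.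
  apply: ler_prod => l _; apply/andP; split.
    apply: sumr_ge0 => s _; case: ifP => // _; apply: prodr_ge0 => i _.
    exact: step_weight_ge0.
  case: ifP => _; first exact: sum_perm_prod_weight_le.
  by rewrite sumr_const card_Sn mulr1.
by rewrite big_split /= prodr_const card_ord -big_mkcond /= prodr_const -exprM mulnC.
Qed.

Lemma mean_wJ_le : (0 < n)%N ->
  (\sum_y wJ y) / n%:R <= expR (- (1 - expR (-1)) * (#|J|%:R / n%:R)).
Proof.
move=> n_gt0.
have card_CJ : #|~: J|%:R = n%:R - #|J|%:R :> R.
  by apply/eqP; rewrite eq_sym subr_eq -natrD addnC cardsC card_ord.
suff -> : (\sum_y wJ y) / n%:R = 1 + - (1 - expR (-1)) * (#|J|%:R / n%:R).
  exact: expR_ge1Dx.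
rewrite sum_step_weight finset.setCK card_CJ.
by field; rewrite pnatr_eq0 -lt0n.
Qed.

Lemma card_eL_lt_le : (0 < n)%N ->
  #|[set pi : perm_family d n | (2 * n * eL pi L I J < #|L| * #|I| * #|J|)%N]|%:R <=
  n`!%:R ^+ d * expR (- ((#|L| * #|I| * #|J|)%:R / n%:R) / 18) :> R.
Proof.
move=> n_gt0; set mu : R := (_ * _ * _)%:R / n%:R.
have nR : 0 < n%:R :> R by rewrite ltr0n.
have mu_ge0 : 0 <= mu by rewrite divr_ge0.
have sub_small : [set pi : perm_family d n |
    (2 * n * eL pi L I J < #|L| * #|I| * #|J|)%N] \subset
    [set pi | (eL pi L I J)%:R <= mu / 2].
  apply/fintype.subsetP => pi; rewrite !inE => /ltnW.
  rewrite -(ler_nat R) !natrM => lt_mu.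
  by rewrite /mu !ler_pdivlMr // !natrM; lra.
rewrite -(ler_pM2r (expR_gt0 (- (mu / 2)))).
apply: le_trans (_ : _ <=
  #|[set pi | (eL pi L I J)%:R <= mu / 2]|%:R * expR (- (mu / 2))) _.
  by rewrite ler_pM2r ?expR_gt0 // ler_nat subset_leq_card.
apply: le_trans (card_le_mul_expR_le _ _) _.
apply: le_trans sum_expR_eL_le _.
rewrite -mulrA ler_wpM2l ?exprn_ge0 ?ler0n //.
apply: le_trans (_ : _ <= expR (- (1 - expR (-1)) * (#|J|%:R / n%:R)) ^+ (#|L| * #|I|)) _.
  apply: lerXn2r; rewrite ?nnegrE ?expR_ge0 ?mean_wJ_le //.
  by rewrite divr_ge0 // sumr_ge0 // => y _; apply: step_weight_ge0.
rewrite -expRM_natr -mulrA.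
have -> : #|J|%:R / n%:R * (#|L| * #|I|)%:R = mu.
  by rewrite /mu !natrM; field; rewrite gt_eqF.
rewrite -expRD ler_expR.
(* 1 - e^-1 - 1/2 >= 1/18 because e^-1 <= 4/9. *)
have gap : 0 <= (4 / 9 - expR (-1)) * mu by rewrite mulr_ge0 // subr_ge0 expRN1_le.
lra.
Qed.
End HoleTail.

Section NoHoles.
Variables (R : realType) (d n k0 n0 : nat).

Let triple := ({set 'I_d} * ({set 'I_n} * {set 'I_n}))%type.

Let large (t : triple) :=
  [&& k0 <= #|t.1|, n0 <= #|t.2.1| & n0 <= #|t.2.2|]%N.

Let holes (t : triple) := [set pi : perm_family d n |
  (2 * n * eL pi t.1 t.2.1 t.2.2 < #|t.1| * #|t.2.1| * #|t.2.2|)%N].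

Lemma not_no_holes_sub :
  [set pi | ~~ no_holes d n k0 n0 pi] \subset \bigcup_(t | large t) holes t.
Proof.
apply/fintype.subsetP => pi; rewrite inE => /forallPn[L].
rewrite negb_imply => /andP[k0_L /forallPn[I /forallPn[J]]].
rewrite negb_imply -ltnNge => /andP[/andP[n0_I n0_J] hole].
by apply/bigcupP; exists (L, (I, J)); rewrite /large ?inE /= ?k0_L ?n0_I ?n0_J.
Qed.

Lemma card_triple_le : (d <= 10 * n)%N -> #|{: triple}|%:R <= expR (12 * n%:R) :> R.
Proof.
move=> d_le.
have card_set (T : finType) : #|{: {set T}}| = (2 ^ #|T|)%N.
  by have := card_powerset [set: T]; rewrite powersetT !cardsT.
rewrite !card_prod !card_set !card_ord -!expnD natrX.
apply: (@le_trans _ _ (2 ^+ (12 * n))).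
  have le12 : (d + (n + n) <= 12 * n)%N by lia.
  by rewrite ler_eXn2l ?ltr1n.
rewrite -[12 * n%:R]mulr1 -natrM expRM_natl lerXn2r ?nnegrE ?expR_ge0 //.
by have := expR_ge1Dx (1 : R); lra.
Qed.

Lemma card_large_holes_le t : (0 < n)%N ->
  234 * n%:R ^+ 2 <= (k0 * n0 ^ 2)%:R :> R -> large t ->
  #|holes t|%:R <= n`!%:R ^+ d * expR (- (13 * n%:R)) :> R.
Proof.
case: t => L [I J] n_gt0 k0_n0 /and3P[/= k0_L n0_I n0_J].
have nR : 0 < n%:R :> R by rewrite ltr0n.
have : (k0 * n0 ^ 2 <= #|L| * #|I| * #|J|)%N.
  by rewrite -mulnA leq_mul // expnS expn1 leq_mul.
rewrite -(ler_nat R) => LIJ_ge.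
apply: le_trans (card_eL_lt_le R L I J n_gt0) _.
rewrite ler_wpM2l ?exprn_ge0 ?ler0n // ler_expR mulNr lerN2 !ler_pdivlMr //.
by move: k0_n0 LIJ_ge; rewrite !natrM => *; nra.
Qed.

Lemma card_not_no_holes_le : (0 < n)%N -> (d <= 10 * n)%N ->
  234 * n%:R ^+ 2 <= (k0 * n0 ^ 2)%:R :> R ->
  #|[set pi | ~~ no_holes d n k0 n0 pi]|%:R <= n`!%:R ^+ d * expR (- n%:R) :> R.
Proof.
move=> n_gt0 d_le k0_n0; set B : R := n`!%:R ^+ d * expR (- (13 * n%:R)).
apply: le_trans (_ : _ <= \sum_(t | large t) (#|holes t|%:R : R)) _.
  rewrite -natr_sum ler_nat (leq_trans (subset_leq_card not_no_holes_sub)) //.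
  exact: card_big_setU.
apply: le_trans (_ : _ <= \sum_(t : triple) B) _.
  rewrite [X in _ <= X](bigID large) /= -[X in X <= _]addr0 lerD //.
    by apply: ler_sum => t; apply: card_large_holes_le.
  by apply: sumr_ge0 => t _; rewrite mulr_ge0 ?exprn_ge0 ?expR_ge0.
have -> : \sum_(t : triple) B = #|{: triple}|%:R * B by rewrite sumr_const mulr_natl.
rewrite /B mulrCA ler_wpM2l ?exprn_ge0 ?ler0n //.
apply: le_trans (ler_wpM2r (expR_ge0 _) (card_triple_le d_le)) _.
by rewrite -expRD ler_expR; lra.
Qed.
End NoHoles.

Lemma unif_prob_ge (R : realType) d n (E : pred (perm_family d n)) p :
  #|[set pi | ~~ E pi]|%:R <= n`!%:R ^+ d * p -> 1 - p <= unif_prob R d n E.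
Proof.
have card_all : #|[set: perm_family d n]|%:R = n`!%:R ^+ d :> R.
  by rewrite cardsT card_ffun card_Sn card_ord natrX.
have card_E : #|[set pi | E pi]|%:R = n`!%:R ^+ d - #|[set pi | ~~ E pi]|%:R :> R.
  have -> : [set pi | ~~ E pi] = ~: [set pi | E pi] by apply/setP => pi; rewrite !inE.
  by rewrite -card_all cardsT -(cardsC [set pi | E pi]) natrD addrK.
have all_gt0 : 0 < n`!%:R ^+ d :> R by rewrite exprn_gt0 // ltr0n fact_gt0.
by rewrite /unif_prob card_all ler_pdivlMr // card_E; lra.
Qed.

Theorem lemma4p1 (R : realType) :
  exists C : R, 0 < C /\
    forall (n d k0 n0 : nat),
      (1 <= d)%N -> (d <= 10 * n)%N ->
      (1 <= k0 <= d)%N -> (1 <= n0 <= n)%N ->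
      C * (n%:R) ^+ 2 <= (k0 * n0 ^ 2)%:R ->
      1 - expR (- (n%:R)) <= unif_prob R d n (no_holes d n k0 n0).
Proof.
exists 234; split=> // n d k0 n0 _ d_le _ /andP[n0_gt0 n0_le] k0_n0.
apply: unif_prob_ge; apply: card_not_no_holes_le => //.
exact: leq_trans n0_le.
Qed.
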